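(* Let $\mathbb{K}$ be a field, $n>1$, $a=\sum_{j=0}^d c_j s^j\in\mathbb{K}[s]^n$ a non-zero row vector of degree $d$ ($c_j\in\mathbb{K}^n$ row vectors), and $A\in\mathbb{K}^{(2d+1)\times n(d+1)}$ the matrix whose $(i,\,kn+r)$ entry ($1\le i\le 2d+1$, $0\le k\le d$, $1\le r\le n$) is the $r$-th entry of $c_{i-1-k}$ (zero if $i-1-k\notin\{0,\dots,d\}$). If $b_1,\dots,b_l$ is a basis of $\ker(A)$, then $\mathrm{syz}(a)=\langle b_1^\flat,\dots,b_l^\flat\rangle_{\mathbb{K}[s]}$.
   Context: For $v\in\mathbb{K}^{n(d+1)}$ written in blocks $v=[w_0;\dots;w_d]$ with $w_i\in\mathbb{K}^n$, $v^\flat=\sum_{i=0}^d s^i w_i\in\mathbb{K}[s]^n$. $\mathrm{syz}(a)=\{h\in\mathbb{K}[s]^n\mid a\,h=0\}$ ($h$ column vectors), and $\langle\cdot\rangle_{\mathbb{K}[s]}$ denotes the $\mathbb{K}[s]$-module generated. *)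

From HB Require Import structures.
From mathcomp Require Import all_boot all_order all_algebra.
Set Implicit Arguments. Unset Strict Implicit. Unset Printing Implicit Defensive.
Import Order.TTheory GRing.Theory Num.Theory.
Local Open Scope ring_scope.

Definition pvdeg (K : fieldType) (n : nat) (a : 'rV[{poly K}]_n) : nat :=
  (\max_(r < n) size (a ord0 r)).-1.

(* The column index k*n + r (0-based) of K^{n(d+1)} = block k, entry r. *)
Lemma blk_idx_subproof (d n : nat) (k : 'I_d.+1) (r : 'I_n) :
  (k * n + r < d.+1 * n)%N.
Proof.
case: k r => k hk [r hr] /=.
have h1 : (k * n + r < k * n + n)%N by rewrite ltn_add2l.
apply: (leq_trans h1).
have -> : (k * n + n = k.+1 * n)%N by rewrite mulSn addnC.
by rewrite leq_mul2r hk orbT.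
Qed.

Definition blk_idx (d n : nat) (k : 'I_d.+1) (r : 'I_n) : 'I_(d.+1 * n) :=
  Ordinal (blk_idx_subproof k r).

(* The (2d+1) x n(d+1) matrix A: entry (i, k n + r) (0-based i, k, r) is the
   r-th entry of c_{i-k}, i.e. the coefficient of s^(i-k) in a_r,
   and 0 when i - k < 0 (coefficients beyond degree d are 0 anyway). *)
Definition coef_mx (K : fieldType) (n : nat) (a : 'rV[{poly K}]_n)
  : 'M[K]_((pvdeg a).*2.+1, (pvdeg a).+1 * n) :=
  \matrix_(i, j) \sum_(k < (pvdeg a).+1) \sum_(r < n | blk_idx k r == j)
      (if (k <= i)%N then (a ord0 r)`_(i - k) else 0).

Definition flat (K : fieldType) (n d : nat) (v : 'cV[K]_(d.+1 * n))
  : 'cV[{poly K}]_n :=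
  \col_(r < n) \sum_(k < d.+1) v (blk_idx k r) ord0 *: 'X^k.

From HB Require Import structures.
From mathcomp Require Import all_boot all_order all_algebra.
From mathcomp Require Import zify.
Set Implicit Arguments. Unset Strict Implicit. Unset Printing Implicit Defensive.
Import Order.TTheory GRing.Theory Num.Theory.
Local Open Scope ring_scope.

(** The map v |-> v^flat identifies ker A with the syzygies of degree at most
   d, so the b_j^flat span all of those.  A general syzygy h reduces to that
   case through a pivot g = a_p <> 0: subtracting (h_i quo g) times the Koszul
   syzygy g e_i - a_i e_p for every i leaves a syzygy h' whose entries off p
   have degree < deg g, and then g h'_p = - sum_{k <> p} a_k h'_k forces
   deg h'_p < d.  The Koszul syzygies themselves have degree at most d. *)

Lemma mx11_eq0 (R : nzRingType) (M : 'M[R]_1) : M ord0 ord0 = 0 -> M = 0.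
Proof. by move=> M00; apply/matrixP => i j; rewrite !ord1 M00 mxE. Qed.

Definition polyspan (R : nzRingType) (n l : nat)
    (G : 'I_l -> 'cV[{poly R}]_n) (x : 'cV[{poly R}]_n) : Prop :=
  exists p : 'I_l -> {poly R}, x = \sum_j p j *: G j.

Section PolySpan.
Variables (R : nzRingType) (n l : nat) (G : 'I_l -> 'cV[{poly R}]_n).

Lemma polyspanD x y : polyspan G x -> polyspan G y -> polyspan G (x + y).
Proof.
case=> p -> [q ->]; exists (fun j => p j + q j).
by rewrite -big_split; apply: eq_bigr => j _; rewrite scalerDl.
Qed.

Lemma polyspanZ c x : polyspan G x -> polyspan G (c *: x).
Proof.
case=> p ->; exists (fun j => c * p j).
by rewrite scaler_sumr; apply: eq_bigr => j _; rewrite scalerA.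
Qed.

Lemma polyspan_sum m (F : 'I_m -> 'cV[{poly R}]_n) :
  (forall i, polyspan G (F i)) -> polyspan G (\sum_i F i).
Proof.
move=> GF; apply: (big_ind (polyspan G)) => //; last exact: polyspanD.
by exists (fun=> 0); rewrite big1 // => j _; rewrite scale0r.
Qed.

End PolySpan.

Section Flat.
Variables (K : fieldType) (n d : nat).

Lemma flat_sum l (b : 'I_l -> 'cV[K]_(d.+1 * n)) (c : 'I_l -> K) :
  flat (\sum_j c j *: b j) = \sum_j (c j)%:P *: flat (b j).
Proof.
apply/matrixP => r z; rewrite !mxE summxE.
under [RHS]eq_bigr => j _ do rewrite !mxE mulr_sumr.
rewrite exchange_big /=; apply: eq_bigr => k _.
rewrite summxE scaler_suml; apply: eq_bigr => j _.
by rewrite !mxE mul_polyC scalerA.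
Qed.

Lemma flat_blk (v : 'cV[K]_(d.+1 * n)) (h : 'cV[{poly K}]_n) :
  (forall k r, v (blk_idx k r) ord0 = (h r ord0)`_k) ->
  (forall r, size (h r ord0) <= d.+1)%N -> flat v = h.
Proof.
move=> vE hs; apply/matrixP => r z; rewrite ord1 mxE.
under eq_bigr => k _ do rewrite vE.
rewrite -(poly_def d.+1 (fun k => (h r ord0)`_k)).
apply/polyP => i; rewrite coef_poly; case: ltnP => // hi.
by rewrite nth_default // (leq_trans (hs r)).
Qed.

Lemma flat_surj (h : 'cV[{poly K}]_n) : (0 < n)%N ->
  (forall r, size (h r ord0) <= d.+1)%N ->
  exists v : 'cV[K]_(d.+1 * n), flat v = h.
Proof.
move=> n_gt0 hs.
exists (\col_j (h (Ordinal (ltn_pmod j n_gt0)) ord0)`_(j %/ n)).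
apply: flat_blk hs => k r; rewrite mxE /=.
have -> : Ordinal (ltn_pmod (k * n + r) n_gt0) = r.
  by apply: val_inj; rewrite /= modnMDl modn_small.
by rewrite divnMDl // divn_small ?addn0.
Qed.

End Flat.

Section CoefMx.
Variables (K : fieldType) (n : nat) (a : 'rV[{poly K}]_n).
Local Notation d := (pvdeg a).

Lemma size_pvdeg r : (size (a ord0 r) <= d.+1)%N.
Proof.
rewrite /pvdeg; have := @leq_bigmax _ (fun r => size (a ord0 r)) r.
by case: (\max_(r0 < n) size (a ord0 r0)) => [|m] //=; rewrite leqn0 => /eqP ->.
Qed.

Let conv (v : 'cV[K]_(d.+1 * n)) (i : nat) : K :=
  \sum_(k < d.+1) \sum_(r < n)
    (if (k <= i)%N then (a ord0 r)`_(i - k) else 0) * v (blk_idx k r) ord0.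

Lemma coef_mul_flat (v : 'cV[K]_(d.+1 * n)) i :
  ((a *m flat v) ord0 ord0)`_i = conv v i.
Proof.
rewrite /conv mxE coef_sum exchange_big /=; apply: eq_bigr => r _.
rewrite mxE mulr_sumr coef_sum; apply: eq_bigr => k _.
by rewrite -scalerAr coefZ coefMXn mulrC; case: leqP; rewrite ?mulr0.
Qed.

Lemma coef_mx_mulE (v : 'cV[K]_(d.+1 * n)) i :
  (coef_mx a *m v) i ord0 = conv v i.
Proof.
rewrite /conv mxE; under eq_bigr => j _ do rewrite mxE mulr_suml.
rewrite exchange_big /=; apply: eq_bigr => k _.
under eq_bigr => j _ do rewrite mulr_suml.
rewrite (exchange_big_dep xpredT) //=; apply: eq_bigr => r _.
by rewrite (eq_bigl (pred1 (blk_idx k r))) ?big_pred1_eq // => j; rewrite eq_sym.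
Qed.

(* The coefficients of a v^flat beyond s^(2d) vanish for degree reasons. *)
Lemma coef_mx_ker (v : 'cV[K]_(d.+1 * n)) :
  coef_mx a *m v = 0 <-> a *m flat v = 0.
Proof.
split=> [Av0 | av0].
  apply: mx11_eq0; apply/polyP => i; rewrite coef0 coef_mul_flat.
  case: (ltnP i d.*2.+1) => hi.
    by move/matrixP: Av0 => /(_ (Ordinal hi) ord0); rewrite coef_mx_mulE mxE.
  rewrite /conv; apply: big1 => k _; apply: big1 => r _.
  case: leqP => hk; last by rewrite mul0r.
  rewrite nth_default ?mul0r //; apply: leq_trans (size_pvdeg r) _.
  by have := ltn_ord k; rewrite -addnn in hi; lia.
apply/matrixP => i z; rewrite ord1 coef_mx_mulE -coef_mul_flat av0 !mxE coef0 //.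
Qed.

End CoefMx.

Definition koszul_syz (R : nzRingType) (n : nat) (a : 'rV[R]_n) (p i : 'I_n)
  : 'cV[R]_n :=
  a ord0 p *: delta_mx i 0 - a ord0 i *: delta_mx p 0.

Lemma koszul_syzP (R : comNzRingType) (n : nat) (a : 'rV[R]_n) p i :
  a *m koszul_syz a p i = 0.
Proof.
apply: mx11_eq0.
by rewrite mulmxBr -!scalemxAr -!colE !mxE mulrC subrr.
Qed.

Lemma koszul_syzE (R : nzRingType) (n : nat) (a : 'rV[R]_n) p i r :
  koszul_syz a p i r ord0 =
  (if r == i then a ord0 p else 0) - (if r == p then a ord0 i else 0).
Proof.
by rewrite !mxE !andbT; case: (r == i); case: (r == p); rewrite ?mulr1 ?mulr0.
Qed.

Lemma size_koszul_syz (K : fieldType) (n : nat) (a : 'rV[{poly K}]_n) p i r :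
  (size (koszul_syz a p i r ord0) <= (pvdeg a).+1)%N.
Proof.
rewrite koszul_syzE; have ha := size_pvdeg a.
apply: leq_trans (size_polyD _ _) _; rewrite size_polyN geq_max.
by case: (r == i); case: (r == p); rewrite ?size_poly0 ?ha.
Qed.

Section Pivot.
Variables (K : fieldType) (n : nat) (a : 'rV[{poly K}]_n) (p : 'I_n).
Local Notation g := (a ord0 p).

Definition pivot_rem (h : 'cV[{poly K}]_n) : 'cV[{poly K}]_n :=
  h - \sum_i (h i ord0 %/ g) *: koszul_syz a p i.

Lemma pivot_remE h r : r != p -> pivot_rem h r ord0 = h r ord0 %% g.
Proof.
move=> /negbTE rp; rewrite 2!mxE summxE (bigD1 r) //= big1 => [|i ir].
  rewrite mxE koszul_syzE eqxx rp subr0 addr0.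
  by rewrite {1}(divp_eq (h r ord0) g) addrAC subrr add0r.
by rewrite mxE koszul_syzE rp eq_sym (negbTE ir) subr0 mulr0.
Qed.

Lemma pivot_rem_syz h : a *m h = 0 -> a *m pivot_rem h = 0.
Proof.
move=> ah0; rewrite mulmxBr ah0 mulmx_sumr big1 ?subr0 // => i _.
by rewrite -scalemxAr koszul_syzP scaler0.
Qed.

Hypothesis g_neq0 : g != 0.

Lemma size_pivot_syz (h : 'cV[{poly K}]_n) : a *m h = 0 ->
  (forall r, r != p -> size (h r ord0) < size g)%N ->
  (size (h p ord0) <= pvdeg a)%N.
Proof.
move=> ah0 hs; have g_gt0 : (0 < size g)%N by rewrite size_poly_gt0.
have ghp : g * h p ord0 = - \sum_(k | k != p) a ord0 k * h k ord0.
  apply/eqP; rewrite -addr_eq0.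
  by move/matrixP: ah0 => /(_ ord0 ord0); rewrite !mxE (bigD1 p) //= => ->.
have size_ghp : (size (g * h p ord0)%R <= (pvdeg a + size g).-1)%N.
  rewrite ghp size_polyN; apply: leq_trans (size_sum _ _ _) _.
  apply/bigmax_leqP => k kp.
  apply: leq_trans (size_polyMleq _ _) _; rewrite -!subn1 leq_sub2r //.
  by have := leq_add (size_pvdeg a k) (hs k kp); rewrite addnS addSn ltnS.
have [->|hp0] := eqVneq (h p ord0) 0; first by rewrite size_poly0.
move: size_ghp; rewrite size_mul // [(size g + _)%N]addnC.
by rewrite -!subn1 -!addnBA // leq_add2r.
Qed.

Lemma size_pivot_rem (h : 'cV[{poly K}]_n) r : a *m h = 0 ->
  (size (pivot_rem h r ord0) <= (pvdeg a).+1)%N.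
Proof.
move=> ah0; have hs k : k != p -> (size (pivot_rem h k ord0) < size g)%N.
  by move=> kp; rewrite pivot_remE // ltn_modp.
have [->|rp] := eqVneq r p.
  exact/ltnW/(size_pivot_syz (pivot_rem_syz ah0) hs).
exact: leq_trans (ltnW (hs r rp)) (size_pvdeg a p).
Qed.

End Pivot.

Theorem lemma5 (K : fieldType) (n : nat) (a : 'rV[{poly K}]_n)
  (l : nat) (b : 'I_l -> 'cV[K]_((pvdeg a).+1 * n)) :
  (1 < n)%N -> a != 0 ->
  (* b_1, ..., b_l is a basis of ker(A) *)
  (forall j, coef_mx a *m b j = 0) ->
  (forall c : 'I_l -> K, \sum_(j < l) c j *: b j = 0 -> forall j, c j = 0) ->
  (forall v : 'cV[K]_((pvdeg a).+1 * n), coef_mx a *m v = 0 ->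
     exists c : 'I_l -> K, v = \sum_(j < l) c j *: b j) ->
  (* syz(a) = < b_1^flat, ..., b_l^flat >_{K[s]} *)
  forall h : 'cV[{poly K}]_n,
    a *m h = 0 <-> exists p : 'I_l -> {poly K}, h = \sum_(j < l) p j *: flat (b j).
Proof.
move=> n_gt1 a_neq0 Ab0 _ Aspan h; split=> [ah0 | [p ->]]; last first.
  rewrite mulmx_sumr big1 // => j _.
  by rewrite -scalemxAr ((coef_mx_ker (b j)).1 (Ab0 j)) scaler0.
have low_span x : a *m x = 0 -> (forall r, size (x r ord0) <= (pvdeg a).+1)%N ->
    polyspan (fun j => flat (b j)) x.
  move=> ax0 xs; have [v vx] := flat_surj (ltnW n_gt1) xs; rewrite -vx in ax0 *.
  have [c ->] := Aspan v ((coef_mx_ker v).2 ax0).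
  by exists (fun j => (c j)%:P); rewrite flat_sum.
have /rV0Pn[p ap_neq0] := a_neq0.
have -> : h = pivot_rem a p h + \sum_i (h i ord0 %/ a ord0 p) *: koszul_syz a p i.
  by rewrite subrK.
apply: polyspanD.
  by apply: low_span => [|r]; [exact: pivot_rem_syz | exact: size_pivot_rem].
apply: polyspan_sum => i; apply/polyspanZ/low_span; first exact: koszul_syzP.
exact: size_koszul_syz.
Qed.
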